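(* Let $d$ be a sufficiently large integer and let $X,Y\subset\mathbb{R}^d$ be finite sets with $|Y|=C|X|$, where $C\leq\log|X|$, and such that the affine hull of $X+Y=\{x+y:x\in X,y\in Y\}$ has dimension $d$. Define $K$ by $|X|+|Y|=K(d+2)$. If $K\leq\log|X|$, then $$|X+Y|\geq\frac{|X||Y|}{2^{10}\log^2|X|}.$$ *)

(* vectors in R^d are row vectors 'rV[R]_d over R : realType;
   finite sets are finmap's {fset _}; log is MathComp-Analysis' natural log ln. *)
From HB Require Import structures.
From mathcomp Require Import all_boot all_order all_algebra.
From mathcomp Require Import finmap.
From mathcomp Require Import reals exp.
Set Implicit Arguments. Unset Strict Implicit. Unset Printing Implicit Defensive.
Import Order.TTheory GRing.Theory Num.Theory.
Local Open Scope ring_scope.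
Local Open Scope fset_scope.

Definition sumset (R : realType) (d : nat) (X Y : {fset 'rV[R]_d}) : {fset 'rV[R]_d} :=
  [fset ((x : 'rV[R]_d) + y)%R | x in X, y in Y].

(* S has full affine dimension d: S is nonempty and, for some (any) x0 in S,
   the differences v - x0 (v in S) span R^d, i.e. the affine hull of S is R^d. *)
Definition full_affine_dim (R : realType) (d : nat) (S : {fset 'rV[R]_d}) : Prop :=
  exists2 x0, x0 \in S &
    \dim (<< [seq v - x0 | v <- (S : seq _)] >>)%VS = d.

From HB Require Import structures.
From mathcomp Require Import all_boot all_order all_algebra.
From mathcomp Require Import finmap.
From mathcomp Require Import reals exp zify ring lra.
Set Implicit Arguments.
Unset Strict Implicit.
Unset Printing Implicit Defensive.

(* Let V and W be the directions of the affine hulls of X and Y. Modulo V all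
   of X collapses to one point, so the translates x + Y are pairwise disjoint
   once Y is cut down to one point per class modulo V; as Y still spans
   (V + W) / V, this gives |X + Y| >= |X| (dim (V + W) - dim V), and likewise
   with X and Y exchanged.  Since dim (V + W) >= d, either dim V or dim W is at
   most d/2, which gives |X + Y| >= |X| d/2 or |Y| d/2, or both exceed d/2 and
   the bound applied to dim W / 2 points of X gives |X + Y| >= (dim W / 2)^2,
   about d^2/16.  Then |X| + |Y| <= (d + 2) log |X| turns each case into the
   claim. *)

Import Order.TTheory GRing.Theory Num.Theory.
Local Open Scope ring_scope.

Lemma uniq_map_inj_in (T U : eqType) (f : T -> U) (s : seq T) :
  uniq (map f s) -> {in s &, injective f}.
Proof.
elim: s => //= x s IH /andP[fxs ufs] y z; rewrite !inE.
move=> /predU1P[->|ys] /predU1P[->|zs] // fE; last exact: IH.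
- by move: fxs; rewrite fE map_f.
- by move: fxs; rewrite -fE map_f.
Qed.

Lemma exists_sub_map_undup (T U : eqType) (f : T -> U) (s : seq T) :
  exists2 s' : seq T, {subset s' <= s} & map f s' = undup (map f s).
Proof.
elim: s => [|y s [s' s's fs']] /=; first by exists [::].
case: ifP => [_ | _]; first by exists s' => // z /s's; rewrite inE orbC => ->.
by exists (y :: s') => [z|]; rewrite /= ?fs' // !inE => /predU1P[->|/s's ->];
  rewrite ?eqxx ?orbT.
Qed.

Lemma allpairs_add_uniq (U V : zmodType) (f : {additive U -> V}) (s t : seq U) :
    uniq s -> uniq (map f t) -> {in s &, forall x x', f x = f x'} ->
  uniq [seq x + y | x <- s, y <- t].
Proof.
move=> us uft fs; apply: allpairs_uniq => //; first exact: map_uniq uft.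
move=> [x y] [x' y'] /allpairsP[[a b] [/= aS bT [-> ->]]].
move=> /allpairsP[[a' b'] [/= aS' bT' [-> ->]]] /= sumE.
have fbE : f b = f b'.
  by apply: (addrI (f a)); rewrite -!raddfD sumE !raddfD (fs a a').
have bE : b = b' := uniq_map_inj_in uft bT bT' fbE.
by move: sumE; rewrite bE => /addIr ->.
Qed.

Definition diffspan (K : fieldType) (vT : vectType K) (x0 : vT) (s : seq vT) :=
  <<[seq v - x0 | v <- s]>>%VS.

Section SumsetDimension.

Variables (K : fieldType) (vT : vectType K).
Implicit Types (V W : {vspace vT}) (s Xs Ys : seq vT).

Lemma dim_diffspan_undup x0 s : (\dim (diffspan x0 s) <= size (undup s))%N.
Proof.
rewrite /diffspan -(eq_span (X := [seq v - x0 | v <- undup s])).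
  by rewrite (leq_trans (dim_span _)) // size_map.
by move=> v; apply/mapP/mapP => -[u us ->]; exists u; rewrite ?mem_undup in us *.
Qed.

Lemma dim_diffspan x0 s : (\dim (diffspan x0 s) <= size s)%N.
Proof. exact: leq_trans (dim_diffspan_undup _ _) (size_undup _). Qed.

Lemma limg_diffspan (wT : vectType K) (f : 'Hom(vT, wT)) x0 s :
  (f @: diffspan x0 s)%VS = diffspan (f x0) (map f s).
Proof.
rewrite limg_span -map_comp /diffspan -map_comp.
by congr <<_>>%VS; apply: eq_map => v /=; rewrite linearB.
Qed.

Lemma exists_lker V : exists f : 'End(vT), lker f = V.
Proof.
exists (\1 - projv V)%VF; apply/vspaceP => w.
rewrite memv_ker add_lfunE opp_lfunE id_lfunE subr_eq0.
by apply/eqP/idP => [->|wV]; [exact: memv_proj | rewrite projv_id].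
Qed.

Lemma dimv_add_lker (wT : vectType K) (f : 'Hom(vT, wT)) V W :
  lker f = V -> \dim (V + W) = (\dim V + \dim (f @: W))%N.
Proof.
move=> kerf; rewrite -(limg_ker_dim f (V + W)) kerf (capv_idPr (addvSl _ _)).
have fV0 : (f @: V = 0)%VS by apply/eqP; rewrite -lkerE kerf.
by rewrite limgD fV0 add0v.
Qed.

Lemma card_sumset_codim Xs Ys (S : {fset vT}) x0 y0 :
    uniq Xs -> {in Xs & Ys, forall x y, x + y \in S} ->
  (size Xs * (\dim (diffspan x0 Xs + diffspan y0 Ys) - \dim (diffspan x0 Xs))
     <= #|` S|)%N.
Proof.
move=> uXs XYS; set V := diffspan x0 Xs.
have [f kerf] := exists_lker V.
have [Ys' Ys'Ys fYs'] := exists_sub_map_undup f Ys.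
have fXs : {in Xs &, forall x x', f x = f x'}.
  move=> x x' xXs x'Xs; apply/eqP; rewrite -subr_eq0 -linearB /= -memv_ker kerf.
  have -> : x - x' = (x - x0) - (x' - x0) by rewrite opprB addrA subrK.
  by apply: memvB; apply: memv_span; exact: map_f.
have sumsS : {subset [seq x + y | x <- Xs, y <- Ys'] <= S}.
  by move=> _ /allpairsP[[x y] [/= xXs /Ys'Ys yYs ->]]; exact: XYS.
have uniq_sums : uniq [seq x + y | x <- Xs, y <- Ys'].
  apply: (@allpairs_add_uniq _ _ (fun_of_lfun f)) => //.
  by rewrite -[X in uniq X]/(map f Ys') fYs' undup_uniq.
apply: leq_trans (uniq_leq_size uniq_sums sumsS); rewrite size_allpairs leq_mul2l.
rewrite (dimv_add_lker _ kerf) addKn limg_diffspan.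
by rewrite -(size_map f Ys') fYs' dim_diffspan_undup orbT.
Qed.

Lemma card_sumset_dim_sub Xs Ys (S : {fset vT}) y0 :
    uniq Xs -> {in Xs & Ys, forall x y, x + y \in S} ->
  (size Xs * (\dim (diffspan y0 Ys) - size Xs) <= #|` S|)%N.
Proof.
move=> uXs XYS; apply: leq_trans (card_sumset_codim 0 y0 uXs XYS).
rewrite leq_mul2l leq_sub ?orbT ?dim_diffspan //.
by apply: dimvS; apply: addvSr.
Qed.

End SumsetDimension.

Lemma sumset_card_cases (n m s d a b D : nat) :
    (d <= D)%N -> (b <= d)%N -> (a <= n)%N ->
    (n * (D - a) <= s)%N -> (m * (D - b) <= s)%N ->
    (forall t, t <= n -> t * (b - t) <= s)%N ->
  [\/ n * d <= 2 * s, m * d <= 2 * s | d * d <= 16 * s + 2 * d]%N.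
Proof.
move=> dD bd an nS mS tS.
have [da | ad] := leqP (2 * a) d; first by apply: Or31; nia.
have [db | bd'] := leqP (2 * b) d; first by apply: Or32; nia.
by apply: Or33; have := tS b./2 ltac:(lia); nia.
Qed.

Lemma ln_ge_half (R : realType) (x : R) : 2 <= x -> 1 / 2 <= ln x.
Proof.
move=> x2; have x0 : 0 < x by lra.
have := @le_ln1Dx R (x^-1 - 1); rewrite [1 + _]addrC subrK lnV ?posrE //.
have : x^-1 <= 2^-1 by rewrite lef_pV2 ?posrE //; lra.
have : 0 < x^-1 by rewrite invr_gt0.
lra.
Qed.

Lemma sumset_bound_of_cases (R : realFieldType) (n m s d : nat) (L : R) :
    (10 <= d)%N -> 1 / 2 <= L -> (n + m)%:R <= L * (d + 2)%:R ->
    [\/ n * d <= 2 * s, m * d <= 2 * s | d * d <= 16 * s + 2 * d]%N ->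
  (n * m)%:R <= 2 ^+ 10 * L ^+ 2 * s%:R.
Proof.
move=> d10 L_ge; rewrite -(ler_nat R) in d10.
have -> : 2 ^+ 10 = 1024 :> R by ring.
rewrite !natrD natrM; set N := n%:R; set M := m%:R; set D := d%:R => nmL cases.
have [N0 M0 s0] : [/\ 0 <= N, 0 <= M & 0 <= s%:R :> R] by [].
have Ls0 : 0 <= L * s%:R by apply: mulr_ge0 => //; lra.
have small_case k : (k * d <= 2 * s)%N -> N * M <= k%:R * (N + M) ->
    N * M <= 1024 * L ^+ 2 * s%:R.
  rewrite -(ler_nat R) !natrM -/D => kd nmk; have k0 : 0 <= k%:R :> R by [].
  have kS : k%:R * D + 2 * k%:R <= 3 * s%:R by nra.
  have : k%:R * (N + M) <= L * (3 * s%:R) by nra.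
  nra.
case: cases => [nd | md | dd]; first (by apply: small_case nd _; nra);
  first by apply: small_case md _; nra.
move: dd; rewrite -(ler_nat R) natrD !natrM -/D => dd.
have : 4 * (N * M) <= (N + M) ^+ 2 by have := sqr_ge0 (N - M); rewrite !expr2; nra.
have : (N + M) ^+ 2 <= (L * (D + 2)) ^+ 2 by rewrite ler_pXn2r ?nnegrE //; nra.
have : (D + 2) ^+ 2 <= 32 * s%:R by rewrite expr2; nra.
have : 0 <= L ^+ 2 * s%:R by rewrite mulr_ge0 ?sqr_ge0.
rewrite exprMn => L2s0 /(ler_wpM2l (sqr_ge0 L)); lra.
Qed.

Lemma mem_sumset (R : realType) (d : nat) (X Y : {fset 'rV[R]_d}) :
  {in X & Y, forall x y, x + y \in sumset X Y}.
Proof. by move=> x y xX yY; apply/imfset2P; exists x => //; exists y. Qed.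

Lemma sumsetP (R : realType) (d : nat) (X Y : {fset 'rV[R]_d}) z :
  z \in sumset X Y -> exists2 x, x \in X & exists2 y, y \in Y & z = x + y.
Proof. by move=> /imfset2P. Qed.

Lemma diffspan_sumset (R : realType) (d : nat) (X Y : {fset 'rV[R]_d}) x0 y0 :
  (diffspan (x0 + y0) (sumset X Y) <= diffspan x0 X + diffspan y0 Y)%VS.
Proof.
apply/span_subvP => _ /mapP[_ /sumsetP[x xX [y yY ->]] ->].
rewrite opprD addrACA; apply: memv_add; apply: memv_span; apply/mapP.
  by exists x.
by exists y.
Qed.

Local Open Scope fset_scope.

Theorem lemma17 (R : realType) :
  exists d0 : nat, forall (d : nat), (d0 <= d)%N ->
  forall X Y : {fset 'rV[R]_d},
    full_affine_dim (sumset X Y) ->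
    (* C := |Y|/|X| <= log |X| *)
    (#|` Y|%:R <= ln (#|` X|%:R) * #|` X|%:R :> R) ->
    (* K := (|X|+|Y|)/(d+2) <= log |X| *)
    ((#|` X| + #|` Y|)%:R <= ln (#|` X|%:R) * (d + 2)%:R :> R) ->
    #|` sumset X Y|%:R >=
      (#|` X| * #|` Y|)%:R / (2 ^+ 10 * (ln (#|` X|%:R : R)) ^+ 2) :> R.
Proof.
exists 10%N => d d10 X Y [_ /sumsetP[x0 x0X [y0 y0Y ->]] full] hC hK.
have XYS := @mem_sumset R d X Y.
have YXS : {in Y & X, forall y x, (y + x)%R \in sumset X Y}.
  by move=> y x yY xX; rewrite addrC XYS.
have dim_sum : (d <= \dim (diffspan x0 X + diffspan y0 Y))%N.
  by rewrite -[X in (X <= _)%N]full; apply/dimvS/diffspan_sumset.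
have dim_le_d (U : {vspace 'rV[R]_d}) : (\dim U <= d)%N.
  by rewrite (leq_trans (dimvS (subvf U))) // dimvf dim_matrix mul1r.
have n_ge2 : (2 <= #|` X|)%N.
  have m_gt0 : (0 < #|` Y|)%N by rewrite cardfs_gt0; apply/fset0Pn; exists y0.
  rewrite leqNgt; apply/negP => n_le1; move: hC; apply/negP; rewrite -ltNge.
  apply: le_lt_trans (_ : 0 < #|` Y|%:R) ; last by rewrite ltr0n.
  by rewrite mulr_le0_ge0 // ln_le0 // lern1 -ltnS.
have L_ge : 1 / 2 <= ln (#|` X|%:R : R) by apply: ln_ge_half; rewrite ler_nat.
rewrite ler_pdivrMr; last by rewrite mulr_gt0 ?exprn_gt0 //; lra.
rewrite [X in _ <= X]mulrC; apply: sumset_bound_of_cases d10 L_ge hK _.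
apply: (sumset_card_cases dim_sum (dim_le_d _) (dim_diffspan _ _)).
- exact: card_sumset_codim (fset_uniq X) XYS.
- by rewrite addvC; exact: card_sumset_codim (fset_uniq Y) YXS.
- move=> t tn; rewrite -(size_takel tn).
  apply: card_sumset_dim_sub (take_uniq t (fset_uniq X)) _ => x y /mem_take.
  exact: XYS.
Qed.
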